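(* Let $q=2^h$ with $h\not\equiv 2\pmod 4$, let $A,B,C,D\in\mathbb F_{q^4}$ with $B^{q^2+1}\neq 1$, and let $$\Lambda=\{(u,v)\in\mathbb F_{q^4}^2 : v^{q^2}+Au+Bv+u^q=0,\ v^{q^2}+u^{q^2}+v^q+Cu+Dv=0\}.$$ Then $\#\Lambda\le q^3$. *)

From HB Require Import structures.
From mathcomp Require Import all_boot all_order all_algebra all_field.
Set Implicit Arguments. Unset Strict Implicit. Unset Printing Implicit Defensive.
Import GRing.Theory.
Local Open Scope ring_scope.

Definition Lambda (F : finFieldType) (q : nat) (A B C D : F) : {set F * F} :=
  [set uv : F * F |
     (uv.2 ^+ (q ^ 2) + A * uv.1 + B * uv.2 + uv.1 ^+ q == 0) &&
     (uv.2 ^+ (q ^ 2) + uv.1 ^+ (q ^ 2) + uv.2 ^+ q + C * uv.1 + D * uv.2 == 0)].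

From HB Require Import structures.
From mathcomp Require Import all_boot all_order all_algebra all_field.
From mathcomp Require Import ring.
Import GRing.Theory.
Local Open Scope ring_scope.

(* Write σ x = x ^ q, an automorphism of F with σ^4 = 1 in characteristic 2, and
   N = 1 + B^(q^2+1), which is nonzero.  Conjugating the first equation by σ^2 and
   eliminating v^(q^2) gives N v = P(u) for a q-polynomial P, so (u, v) |-> u is
   injective on Lambda.  Multiplying the sum of the two equations by N σ(N) and
   substituting N v and σ(N) v^q, every first coordinate becomes a root of a
   q-polynomial of q-degree at most 3, which has at most q^3 roots unless it is 0.
   If its coefficients of u^q, u^(q^2), u^(q^3) all vanish, comparing N with its
   conjugates forces A^q = A + 1 and A^4 = A + 1; then A^16 = A, and A^(2^h) = A + 1
   is possible only for h = 2 mod 4. *)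

Lemma card_qpoly_roots (F : finFieldType) (q : nat) (c : seq F) (S : {set F}) :
  (1 < q)%N -> has (fun a => a != 0) c ->
  {in S, forall x, \sum_(j < size c) c`_j * x ^+ (q ^ j) = 0} ->
  (#|S| <= q ^ (size c).-1)%N.
Proof.
move=> q_gt1 /hasP[_ /(nthP 0)[k k_lt <-] ck_neq0] S_roots.
pose p : {poly F} := \sum_(j < size c) c`_j *: 'X^(q ^ j).
have coef_p i : (i < size c)%N -> p`_(q ^ i) = c`_i.
  move=> i_lt; rewrite coef_sum (bigD1 (Ordinal i_lt)) //= coefZ coefXn eqxx mulr1.
  rewrite big1 ?addr0 // => j /negPf ne_ji; rewrite coefZ coefXn eqn_exp2l //.
  by rewrite -val_eqE /= in ne_ji; rewrite eq_sym ne_ji mulr0.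
have p_neq0 : p != 0 by apply: contra_neq ck_neq0 => p0; rewrite -coef_p // p0 coef0.
have size_p : (size p <= (q ^ (size c).-1).+1)%N.
  apply: (leq_trans (size_sum _ _ _)); apply/bigmax_leqP => j _.
  apply: (leq_trans (size_scale_leq _ _)); rewrite size_polyXn ltnS leq_exp2l //.
  by rewrite -ltnS prednK // (leq_trans _ k_lt).
have roots_p : all (root p) (enum S).
  apply/allP => x; rewrite mem_enum => /S_roots x_root.
  rewrite /root horner_sum -[X in _ == X]x_root; apply/eqP/eq_bigr => j _.
  by rewrite hornerZ hornerXn.
by rewrite cardE -ltnS (leq_trans (max_poly_roots p_neq0 roots_p (enum_uniq _))).
Qed.

Section Char2Automorphism.
Context {F : fieldType}.
Hypothesis F2 : 2 \in [pchar F].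

Lemma drop_mulr2n_pchar2 (t x y : F) : x = y + t *+ 2 -> x = y.
Proof. by rewrite mulrn_pchar // addr0. Qed.

Lemma addr_swap_pchar2 {x y z : F} : x = y + z -> y = x + z.
Proof. by move->; rewrite addrK_pchar2. Qed.

Lemma addr_eq0_pchar2 (x y : F) : x + y = 0 <-> x = y.
Proof.
split=> [/(canRL (addrK_pchar2 F2 y))|->]; last exact: addrr_pchar2.
by rewrite add0r.
Qed.

Definition norm1p (σ : F -> F) (b : F) := 1 + b * σ (σ b).

(* The coefficients of u, σ u, σ^2 u, σ^3 u in n n' (σ v + (B + D) v + σ^2 u + σ u
   + (A + C) u), once n v and n' σ v are replaced by their values from [norm1p_snd]. *)
Definition psi_coefs (σ : F -> F) (A B C D : F) : seq F :=
  let n := norm1p σ B in let n' := norm1p σ (σ B) in let P := B + D in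
  [:: n + P * n' * A * σ (σ B) + n * n' * (A + C);
      n * σ A * σ (σ (σ B)) + P * n' * σ (σ B) + n * n';
      n * σ (σ (σ B)) + P * n' * σ (σ A) + n * n';
      n * σ (σ (σ A)) + P * n'].

Context {σ : F -> F}.
Hypotheses (σD : {morph σ : x y / x + y}) (σM : {morph σ : x y / x * y}).
Hypotheses (σ1 : σ 1 = 1) (σ4 : forall x, σ (σ (σ (σ x))) = x).

Lemma σ0 : σ 0 = 0.
Proof. by apply: (addrI (σ 0)); rewrite -σD !addr0. Qed.

Lemma σ_eq0 x : (σ x == 0) = (x == 0).
Proof.
apply/eqP/eqP=> [x0|->]; last exact: σ0.
by rewrite -[x]σ4 x0 !σ0.
Qed.

Lemma σ_norm1p b : σ (norm1p σ b) = norm1p σ (σ b).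
Proof. by rewrite /norm1p σD σM σ1. Qed.

Lemma norm1p_σ2 b : norm1p σ (σ (σ b)) = norm1p σ b.
Proof. by rewrite /norm1p σ4 mulrC. Qed.

Local Ltac conjugate f e :=
  let H := fresh in
  have H := congr1 f e;
  rewrite /= ?(σ_norm1p, σD, σM, σ1, σ0) ?σ4 ?norm1p_σ2 in H; exact: H.

Lemma norm1p_snd {a b u v : F} : σ (σ v) + a * u + b * v + σ u = 0 ->
  norm1p σ b * v =
    σ (σ (σ u)) + σ (σ a) * σ (σ u) + σ (σ b) * σ u + a * σ (σ b) * u.
Proof.
move=> e.
have e2 : v + σ (σ a) * σ (σ u) + σ (σ b) * σ (σ v) + σ (σ (σ u)) = 0.
  by conjugate (σ \o σ) e.
have {}e : σ (σ v) = a * u + b * v + σ u by apply/addr_eq0_pchar2; rewrite -e; ring.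
have {}e2 : v = σ (σ a) * σ (σ u) + σ (σ b) * σ (σ v) + σ (σ (σ u)).
  by apply/addr_eq0_pchar2; rewrite -e2; ring.
rewrite /norm1p mulrDl mul1r {1}e2 e.
by apply: (drop_mulr2n_pchar2 (b * σ (σ b) * v)); ring.
Qed.

Lemma psi_root {A B C D u v : F} :
  σ (σ v) + A * u + B * v + σ u = 0 ->
  σ (σ v) + σ (σ u) + σ v + C * u + D * v = 0 ->
  \sum_(j < 4) (psi_coefs σ A B C D)`_j * iter j σ u = 0.
Proof.
move=> e1 e2.
have S : σ v + (B + D) * v = σ (σ u) + σ u + (A + C) * u.
  apply/addr_eq0_pchar2/(drop_mulr2n_pchar2 (- σ (σ v))).
  by rewrite -[0]addr0 -{1}e1 -e2; ring.
have V0 := norm1p_snd e1.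
have V1 : norm1p σ (σ B) * σ v =
    u + σ (σ (σ A)) * σ (σ (σ u)) + σ (σ (σ B)) * σ (σ u) + σ A * σ (σ (σ B)) * σ u.
  by rewrite -{1}[u]σ4; apply: norm1p_snd; conjugate σ e1.
rewrite !big_ord_recr big_ord0 /= add0r.
set n := norm1p σ B in V0 *; set n' := norm1p σ (σ B) in V1 *.
transitivity (n * (n' * σ v) + (B + D) * n' * (n * v)
              + n * n' * (σ (σ u) + σ u + (A + C) * u)).
  by rewrite V0 V1; ring.
transitivity (n * n' * ((σ v + (B + D) * v) + (σ (σ u) + σ u + (A + C) * u))).
  by ring.
by rewrite S addrr_pchar2 // mulr0.
Qed.

Lemma psi_coefs_eq0 {A B C D : F} : norm1p σ B != 0 ->
    ~~ has (fun c => c != 0) (psi_coefs σ A B C D) ->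
  norm1p σ B = B + σ (σ (σ A)) * A /\ norm1p σ B = σ (σ A) * B + A * σ (σ (σ B)).
Proof.
move=> n_neq0; rewrite /= orbF !negb_or !negbK => /and4P[_ /eqP c1 /eqP c2 /eqP c3].
have {}c3 : (B + D) * norm1p σ (σ B) = norm1p σ B * σ (σ (σ A)).
  by symmetry; apply/addr_eq0_pchar2.
have cancel_n x : norm1p σ B * x = 0 -> x = 0.
  by move/eqP; rewrite mulf_eq0 (negPf n_neq0) => /eqP.
have e2 : σ (σ (σ B)) + σ (σ (σ A)) * σ (σ A) + norm1p σ (σ B) = 0.
  by apply: cancel_n; rewrite -c2 c3; ring.
have e1 : σ A * σ (σ (σ B)) + σ (σ (σ A)) * σ (σ B) + norm1p σ (σ B) = 0.
  by apply: cancel_n; rewrite -c1 c3; ring.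
have {}e2 : B + A * σ (σ (σ A)) + norm1p σ B = 0 by conjugate σ e2.
have {}e1 : σ (σ A) * B + A * σ (σ (σ B)) + norm1p σ B = 0 by conjugate σ e1.
by split; apply/esym/addr_eq0_pchar2; [rewrite -e2 | rewrite -e1]; ring.
Qed.

Section Degenerate.
Context {a b : F}.
Local Notation N := (norm1p σ b).
Local Notation N' := (norm1p σ (σ b)).
Hypothesis N_neq0 : N != 0.
Hypothesis N_c2 : N = b + σ (σ (σ a)) * a.
Hypothesis N_c1 : N = σ (σ a) * b + a * σ (σ (σ b)).

Let N_c2σ : N' = σ b + a * σ a.
Proof. conjugate σ N_c2. Qed.

Let N_c2σ2 : N = σ (σ b) + σ a * σ (σ a).
Proof. conjugate σ N_c2σ. Qed.

Let N_c2σ3 : N' = σ (σ (σ b)) + σ (σ a) * σ (σ (σ a)).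
Proof. conjugate σ N_c2σ2. Qed.

Lemma degenerate_norm1p_ratio : N * (1 + σ (σ a)) = a * N'.
Proof.
apply: (drop_mulr2n_pchar2 (σ (σ a) * b)).
by rewrite mulrDr mulr1 {1}N_c1 N_c2 N_c2σ3; ring.
Qed.

(* If N were σ-invariant, N = 1 + b σ^2(b) and its conjugate would be two quadratic
   expressions in N and a whose difference is N itself. *)
Lemma degenerate_norm1p_σ_neq : N' != N.
Proof.
apply/eqP=> NN; move/eqP: N_neq0; apply.
have a2 : σ (σ a) = a + 1.
  apply: addr_swap_pchar2; rewrite addrC; apply: (mulfI N_neq0).
  by rewrite degenerate_norm1p_ratio NN mulrC.
have a3 : σ (σ (σ a)) = σ a + 1 by conjugate σ a2.
have X : N = 1 + (N + (σ a + 1) * a) * (N + σ a * (a + 1)).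
  by rewrite -a3 -a2 -(addr_swap_pchar2 N_c2) -(addr_swap_pchar2 N_c2σ2).
have Y : N = 1 + (N + a * σ a) * (N + (a + 1) * (σ a + 1)).
  by rewrite -a3 -a2 -NN -(addr_swap_pchar2 N_c2σ) -(addr_swap_pchar2 N_c2σ3).
have : (1 + (N + a * σ a) * (N + (a + 1) * (σ a + 1))) -
       (1 + (N + (σ a + 1) * a) * (N + σ a * (a + 1))) = 0.
  by rewrite -X -Y subrr.
by rewrite (_ : _ - _ = N) //; ring.
Qed.

Lemma degenerate_σ2_fixed : σ (σ a) = a.
Proof.
have ratio2 : N * (1 + a) = σ (σ a) * N'.
  by conjugate (σ \o σ) degenerate_norm1p_ratio.
have : (a + σ (σ a)) * N = (a + σ (σ a)) * N'.
  apply: (drop_mulr2n_pchar2 (- N)).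
  transitivity (N * (1 + σ (σ a)) + N * (1 + a) - N *+ 2); first ring.
  by rewrite degenerate_norm1p_ratio ratio2; ring.
have [/addr_eq0_pchar2 //|a_neq] := eqVneq (a + σ (σ a)) 0.
move/(mulfI a_neq) => NN.
by move: degenerate_norm1p_σ_neq; rewrite NN eqxx.
Qed.

Let a3 : σ (σ (σ a)) = σ a.
Proof. conjugate σ degenerate_σ2_fixed. Qed.

Let ratio0 : N * (1 + a) = a * N'.
Proof. by rewrite -{1}degenerate_σ2_fixed degenerate_norm1p_ratio. Qed.

Lemma degenerate_frob_a : σ a = a + 1.
Proof.
have ratio1 : N' * (1 + σ a) = σ a * N by conjugate σ ratio0.
have N'_neq0 : N' != 0 by rewrite -σ_norm1p σ_eq0.
have : (1 + a) * (1 + σ a) = a * σ a.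
  apply: (mulfI (mulf_neq0 N_neq0 N'_neq0)).
  transitivity ((N * (1 + a)) * (N' * (1 + σ a))); first ring.
  by rewrite ratio0 ratio1; ring.
move=> e; apply/esym; rewrite addrC; apply/addr_eq0_pchar2.
have -> : 1 + a + σ a = (1 + a) * (1 + σ a) - a * σ a by ring.
by rewrite e subrr.
Qed.

Let Nb : N = b + σ a * a.
Proof. by rewrite N_c2 a3. Qed.

Let N'b : N' = σ b + σ a * a.
Proof. by rewrite N_c2σ mulrC. Qed.

Let b2 : σ (σ b) = b.
Proof. by rewrite (addr_swap_pchar2 N_c2σ2) degenerate_σ2_fixed -(addr_swap_pchar2 Nb). Qed.

Lemma degenerate_frob_b : σ b = b + 1.
Proof.
have : (b + σ b) * (b + σ b + 1) = 0.
  rewrite (_ : _ * _ = (N + (b + σ a * a)) + (N' + (σ b + σ a * a))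
      + (b * σ b - 1 - σ a * a) *+ 2); last by rewrite /norm1p b2; ring.
  by rewrite -{1}Nb -{1}N'b !addrr_pchar2 // mulrn_pchar // !addr0.
move/eqP; rewrite mulf_eq0 => /orP[/eqP/addr_eq0_pchar2 bb|/eqP/addr_eq0_pchar2].
  by move: degenerate_norm1p_σ_neq; rewrite -bb eqxx.
by rewrite [b + σ b]addrC => /esym/addr_swap_pchar2 ->; rewrite addrC.
Qed.

Lemma degenerate_sqr_b : b = a ^+ 2.
Proof.
have e := ratio0; rewrite Nb N'b degenerate_frob_b degenerate_frob_a in e.
apply: (drop_mulr2n_pchar2 (- a ^+ 2)).
transitivity ((b + (a + 1) * a) * (1 + a) - a * (b + 1 + (a + 1) * a) - a ^+ 2); first ring.
by rewrite e subrr; ring.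
Qed.

Lemma degenerate_pow4 : a ^+ 4 = a + 1.
Proof.
have e := Nb; rewrite /norm1p b2 degenerate_frob_a degenerate_sqr_b in e.
apply: (drop_mulr2n_pchar2 (a ^+ 2 - 1)).
transitivity (1 + a ^+ 2 * a ^+ 2 - (a ^+ 2 + (a + 1) * a) + (a ^+ 2 + a ^+ 2 + a - 1)).
  by ring.
by rewrite e subrr; ring.
Qed.

End Degenerate.

End Char2Automorphism.

Lemma expr2n_addr1_mod4 {R : comNzRingType} {x : R} {h : nat} : 2 \in [pchar R] ->
  x ^+ 4 = x + 1 -> x ^+ (2 ^ h) = x + 1 -> (h %% 4 = 2)%N.
Proof.
move=> R2 x4 xh.
have sqrD (y z : R) : (y + z) ^+ 2 = y ^+ 2 + z ^+ 2 by rewrite sqrrD mulrn_pchar // addr0.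
have neq_add1 (y : R) : y <> y + 1.
  by rewrite -{1}[y]addr0 => /addrI/eqP; rewrite eq_sym oner_eq0.
have x4_sqr : (x ^+ 2) ^+ 2 = x + 1 by rewrite -exprM.
have x16 : x ^+ (2 ^ 4) = x.
  rewrite (_ : 2 ^ 4 = 2 * 2 * 2 * 2)%N // !exprM x4_sqr !sqrD x4_sqr !expr1n.
  exact: addrK_pchar2.
have xh_mod : x ^+ (2 ^ h) = x ^+ (2 ^ (h %% 4)).
  rewrite {1}(divn_eq h 4) expnD exprM; congr (_ ^+ _).
  by elim: (h %/ 4)%N => [|m IH]; rewrite ?expr1 // mulSn expnD exprM x16.
move: xh; rewrite xh_mod.
have : (h %% 4 < 4)%N by rewrite ltn_mod.
case: (h %% 4)%N => [|[|[|[|//]]]] // _; rewrite ?expr1 ?expn1.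
- by move/neq_add1.
- by move=> x2; move: x4_sqr; rewrite x2 sqrD expr1n -x2 => /esym/neq_add1.
rewrite (_ : 2 ^ 3 = 2 * 2 * 2)%N // !exprM x4_sqr sqrD expr1n => /addIr x2.
by move: x4_sqr; rewrite !x2 => /neq_add1.
Qed.

Section FrobeniusPower.
Context {F : finFieldType} {h : nat}.
Hypotheses (F2 : 2 \in [pchar F]) (hF : #|F| = ((2 ^ h) ^ 4)%N).

Let q := (2 ^ h)%N.
Let σ (x : F) := x ^+ q.

Let q_gt1 : (1 < q)%N.
Proof.
rewrite -{1}(expn0 2) ltn_exp2l //; case: h hF => // hF1.
by have := card_finNzRing_gt1 F; rewrite hF1.
Qed.

Let σD : {morph σ : x y / x + y}.
Proof. by move=> x y; apply: exprDn_pchar; rewrite pnatX (pnatE _ (pcharf_prime F2)) F2. Qed.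

Let σM : {morph σ : x y / x * y}. Proof. by move=> x y; apply: exprMn. Qed.

Let σ1 : σ 1 = 1. Proof. exact: expr1n. Qed.

Let σ4 x : σ (σ (σ (σ x))) = x.
Proof. by rewrite /σ -!exprM -[RHS](expf_card x) hF !expnS expn0 muln1 !mulnA. Qed.

Let σ2 x : x ^+ (q ^ 2) = σ (σ x).
Proof. by rewrite /σ -exprM mulnn. Qed.

Let iter_σ j x : iter j σ x = x ^+ (q ^ j).
Proof. by elim: j => [|j IH]; rewrite ?expr1 //= IH /σ -exprM expnSr. Qed.

Lemma card_Lambda_le {A B C D : F} : B ^+ (q ^ 2 + 1) != 1 ->
  ~ (A ^+ q = A + 1 /\ A ^+ 4 = A + 1) -> (#|Lambda q A B C D| <= q ^ 3)%N.
Proof.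
move=> hB nondeg.
have n_neq0 : norm1p σ B != 0.
  apply: contra hB => /eqP/(addr_eq0_pchar2 F2) ->.
  by rewrite exprD expr1 σ2 mulrC.
have eqs u v : (u, v) \in Lambda q A B C D ->
    σ (σ v) + A * u + B * v + σ u = 0 /\ σ (σ v) + σ (σ u) + σ v + C * u + D * v = 0.
  by rewrite inE /= !σ2 => /andP[/eqP e1 /eqP e2].
have fst_inj : {in Lambda q A B C D &, injective fst}.
  move=> [u v] [u' v'] /eqs[e1 _] /eqs[e1' _] /= eq_u; subst u'.
  congr (_, _); apply: (mulfI n_neq0).
  by rewrite (norm1p_snd F2 σD σM σ4 e1) (norm1p_snd F2 σD σM σ4 e1').
rewrite -(card_in_imset fst_inj).
apply: (@card_qpoly_roots _ _ (psi_coefs σ A B C D)) => //.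
  apply/negPn/negP => /(psi_coefs_eq0 F2 σD σM σ1 σ4 n_neq0)[E2 E1]; apply: nondeg.
  by split; [exact: (degenerate_frob_a F2 σD σM σ1 σ4 n_neq0 E2 E1)
            |exact: (degenerate_pow4 F2 σD σM σ1 σ4 n_neq0 E2 E1)].
move=> _ /imsetP[[u v] /eqs[e1 e2] ->] /=.
rewrite -[RHS](psi_root F2 σD σM σ4 e1 e2).
by apply: eq_bigr => j _; rewrite iter_σ.
Qed.

End FrobeniusPower.

Theorem proposition4p2 (h : nat) (F : finFieldType)
  (hh : (h %% 4 != 2)%N) (hF : #|F| = ((2 ^ h) ^ 4)%N)
  (A B C D : F) (hB : B ^+ ((2 ^ h) ^ 2 + 1) != 1) :
  (#|Lambda (2 ^ h) A B C D| <= (2 ^ h) ^ 3)%N.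
Proof.
have F2 : 2 \in [pchar F] by apply: (card_finPcharP (n := (h * 4)%N)); rewrite ?hF ?expnM.
apply: (card_Lambda_le F2 hF hB) => -[Aq A4].
by move/eqP: hh; apply; apply: expr2n_addr1_mod4 F2 A4 Aq.
Qed.
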